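(* Let $d>1$ and let $s$ be an integer with $1<s<2^d$, written as $s=j\cdot 2^k$ with $j$ odd and $k\ge 1$. Then \[\lambda^*(d,s+1)\ge \frac1e\,(1-2^{-k})\quad\text{and}\quad \lambda^*(d,s-1)\ge\frac1e\,(1-2^{-k}).\]
   Context: For integers $n\ge d\ge 1$, a $d$-flat in $\mathbb{F}_2^n$ is a set $x_0+U$ with $x_0\in\mathbb{F}_2^n$ and $U$ a $d$-dimensional linear subspace of $\mathbb{F}_2^n$. For $A\subseteq\mathbb{F}_2^n$ and an integer $0\le s\le 2^d$, $\lambda^*(n,d,s,A)$ denotes the fraction of $d$-flats $Q$ in $\mathbb{F}_2^n$ with $|Q\cap A|=s$. Let $\lambda^*(n,d,s)=\max_{A\subseteq\mathbb{F}_2^n}\lambda^*(n,d,s,A)$; this is non-increasing in $n$, and $\lambda^*(d,s)=\lim_{n\to\infty}\lambda^*(n,d,s)$. *)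

From HB Require Import structures.
From mathcomp Require Import all_boot all_order all_algebra.
From mathcomp Require Import all_classical all_reals all_analysis.
Set Implicit Arguments. Unset Strict Implicit. Unset Printing Implicit Defensive.
Import Order.TTheory GRing.Theory Num.Theory.
Import numFieldNormedType.Exports.
Local Open Scope ring_scope.

Notation F2vec n := 'rV['F_2]_n.

(* Q is a d-flat of F_2^n: Q = x0 + U with U the row space of a row-free
   d x n matrix M (i.e. U a d-dimensional linear subspace). *)
Definition is_flat (n d : nat) (Q : {set F2vec n}) : bool :=
  [exists x0 : F2vec n, exists M : 'M['F_2]_(d, n),
     row_free M && (Q == [set x0 + v *m M | v : 'rV['F_2]_d])].

Definition flats (n d : nat) : {set {set F2vec n}} := [set Q | is_flat d Q].

Definition lam (R : realType) (n d s : nat) (A : {set F2vec n}) : R :=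
  #|[set Q in flats n d | #|Q :&: A| == s]|%:R / #|flats n d|%:R.

(* lambda^*(n,d,s) = max over A (all values are >= 0, so 0 is a neutral start) *)
Definition lamstar_n (R : realType) (n d s : nat) : R :=
  \big[Num.max/0]_(A : {set F2vec n}) lam R d s A.

Definition lamstar (R : realType) (d s : nat) : R :=
  limn ((fun n => lamstar_n R n d s) : R^nat).

From HB Require Import structures.
From mathcomp Require Import all_boot all_order all_algebra.
From mathcomp Require Import all_classical all_reals all_analysis.
From mathcomp Require Import unstable ring.
(* Re-imported so that finset/fintype lemmas shadow their classical_sets homonyms. *)
From mathcomp Require Import fintype finset.
Set Implicit Arguments. Unset Strict Implicit. Unset Printing Implicit Defensive.
Import Order.TTheory GRing.Theory Num.Theory.
Import numFieldNormedType.Exports.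
Local Open Scope ring_scope.

(* Take m = d - k and B a j-subset of F_2^m.  For a uniformly random matrix
   L : F_2^N -> F_2^m and a uniformly random colouring g of F_2^N with q + 1
   colours, plant A = L^-1(B) \cup g^-1(0), respectively A = L^-1(B) \ g^-1(0).
   A fixed d-flat x0 + <M> meets L^-1(B) in exactly j 2^k = s points as soon as
   M L is onto, which fails with probability at most 2^-k.  It then meets A in
   s + 1 (resp. s - 1) points iff g vanishes exactly once on the q + 1 = 2^d - s
   (resp. s) points of the flat outside (resp. inside) L^-1(B), an event of
   probability (1 - 1/(q+1))^q >= 1/e.  Averaging over (L, g) bounds
   lambda^*(N, d, s +- 1) for every N >= d, and the bound passes to the limit
   since lambda^*(n, d, s) is non-increasing in n, which is again an averaging
   argument, over the affine embeddings of F_2^n into F_2^(n+1). *)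

(** * Counting *)

Lemma card_preim_const_fibers (X Y : finType) (f : X -> Y) (XS : {set X})
    (YS : {set Y}) (K : nat) :
  {in YS, forall y, #|[set x in XS | f x == y]| = K} ->
  {in XS, forall x, f x \in YS} ->
  forall P : pred Y, #|[set x in XS | P (f x)]| = (K * #|[set y in YS | P y]|)%N.
Proof.
move=> fibK fXS P.
rewrite -sum1_card (partition_big f (fun y => (y \in YS) && P y)) /=; last first.
  by move=> x; rewrite inE => /andP[xS Px]; rewrite fXS.
rewrite mulnC -sum_nat_const; apply: eq_big => [y|y /andP[yS Py]]; first by rewrite inE.
rewrite -(fibK y yS) -sum1_card; apply: eq_bigl => x; rewrite !inE.
by case: eqP => [->|]; rewrite ?Py ?andbT ?andbF.
Qed.

Lemma card_preim_uniform (X Y : finType) (f : X -> Y) (XS : {set X}) (YS : {set Y}) :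
  {in YS &, forall y1 y2,
     #|[set x in XS | f x == y1]| <= #|[set x in XS | f x == y2]|}%N ->
  {in XS, forall x, f x \in YS} ->
  exists K, forall P : pred Y,
    #|[set x in XS | P (f x)]| = (K * #|[set y in YS | P y]|)%N.
Proof.
move=> fib_le fXS.
have [y0 y0S|YS0] := pickP (mem YS).
  exists #|[set x in XS | f x == y0]|; apply: card_preim_const_fibers => // y yS.
  by apply/eqP; rewrite eqn_leq !fib_le.
exists 0%N => P; apply/eqP; rewrite mul0n cards_eq0; apply/eqP/setP => x.
by rewrite !inE; apply/negbTE/andP => -[/fXS fx _]; have := YS0 (f x); rewrite /= fx.
Qed.

Lemma setIdT (T : finType) (A : {set T}) : [set x in A | true] = A.
Proof. by apply/setP => x; rewrite !inE andbT. Qed.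

Lemma card_pairs_sum (A B : finType) (SA : {set A}) (Q : A -> B -> bool) :
  #|[set q : A * B | (q.1 \in SA) && Q q.1 q.2]| = (\sum_(a in SA) #|[set b | Q a b]|)%N.
Proof.
rewrite -sum1_card (eq_bigr (fun a => \sum_(b | Q a b) 1)%N); last first.
  by move=> a _; rewrite -sum1_card; apply: eq_bigl => b; rewrite inE.
by rewrite pair_big_dep /=; apply: eq_bigl => q; rewrite inE.
Qed.

Lemma card_preimset_sum (T U : finType) (f : T -> U) (B : {set U}) :
  #|[set x | f x \in B]| = (\sum_(b in B) #|[set x | f x == b]|)%N.
Proof.
rewrite -sum1_card (partition_big f (mem B)) /=; last by move=> x; rewrite inE.
apply: eq_bigr => b bB; rewrite -sum1_card; apply: eq_bigl => x; rewrite !inE.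
by case: (eqVneq (f x) b) => [->|_]; rewrite ?bB ?andbF ?andbT.
Qed.

Lemma sum_card_exchange (I J : finType) (A : {set I}) (B : {set J}) (r : I -> J -> bool) :
  (\sum_(i in A) #|[set j in B | r i j]| = \sum_(j in B) #|[set i in A | r i j]|)%N.
Proof.
have cardE (T : finType) (S : {set T}) (P : pred T) :
    #|[set x in S | P x]| = (\sum_(x in S) P x)%N.
  rewrite -sum1_card (eq_bigl (fun x => (x \in S) && P x)) => [|x]; last by rewrite inE.
  by rewrite big_mkcondr /=; apply: eq_bigr => x _; case: (P x).
under eq_bigr do rewrite cardE; rewrite exchange_big /=.
by under [RHS]eq_bigr do rewrite cardE.
Qed.

Lemma card_fiber_additive (U V : finZmodType) (f : U -> V) (w : V) :
  zmod_morphism f -> (forall v, exists u, f u = v) ->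
  (#|[set u | f u == w]| * #|V|)%N = #|U|.
Proof.
move=> fB fsurj.
have f0 : f 0 = 0 by rewrite -(subrr 0) fB subrr.
have fN a : f (- a) = - f a by rewrite -sub0r fB f0 sub0r.
have fiber_shift u0 : [set u | f u == f u0] = [set u + u0 | u in [set u | f u == 0]].
  apply/setP => u; rewrite inE; apply/idP/imsetP => [/eqP fu|[v]].
    by exists (u - u0); rewrite ?subrK // inE fB fu subrr.
  by rewrite inE => /eqP fv ->; rewrite -[u0]opprK fB fv fN opprK sub0r opprK.
have fiber_ker v : #|[set u | f u == v]| = #|[set u | f u == 0]|.
  by have [u0 <-] := fsurj v; rewrite fiber_shift card_imset //; apply: addIr.
have inT (T : finType) (P : pred T) : [set x in [set: T] | P x] = [set x | P x].
  by apply/setP => x; rewrite !inE.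
have fibT : {in [set: V], forall v,
    #|[set u in [set: U] | f u == v]| = #|[set u | f u == 0]|}.
  by move=> v _; rewrite inT fiber_ker.
have := card_preim_const_fibers fibT (fun u _ => in_setT (f u)) predT.
by rewrite !inT !cardsT fiber_ker mulnC.
Qed.

Section ColouringsWithOneZero.

Variables (T : finType) (q : nat) (S : {set T}).

Let zeros (g : {ffun T -> 'I_q.+1}) := [set y in S | g y == ord0].

Lemma card_ffun_zeros_set1 x : x \in S ->
  #|[set g | zeros g == [set x]]| = (q ^ #|S|.-1 * q.+1 ^ #|~: S|)%N.
Proof.
move=> xS.
pose F y := if y == x then pred1 (@ord0 q) else if y \in S then predC1 (@ord0 q) else predT.
have -> : #|[set g | zeros g == [set x]]| = #|(family F : simpl_pred _)|.
  apply: eq_card => g; rewrite inE; apply/eqP/familyP => [Zg y|Fg].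
    have : (y \in zeros g) = (y == x) by rewrite Zg inE.
    rewrite /F inE; case: (eqVneq y x) => [->|_]; first by rewrite xS /= inE => ->.
    by case: (y \in S) => //= /negbT; rewrite !inE.
  apply/setP => y; rewrite !inE; have := Fg y; rewrite /F.
  case: eqP => [-> /= /eqP ->|_]; first by rewrite xS eqxx.
  by case: (y \in S) => //= /negbTE.
rewrite card_family foldrE big_map big_enum /= (bigD1 x) //=.
rewrite {1}/F eqxx card1 mul1n (bigID (mem S)) /=.
rewrite (eq_bigr (fun _ => q)); last first.
  by move=> y /andP[/negbTE yx yS]; rewrite /F yx yS cardC1 card_ord.
rewrite [X in (_ * X)%N](eq_bigr (fun _ => q.+1)); last first.
  by move=> y /andP[/negbTE yx /negbTE yS]; rewrite /F yx yS card_ord.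
rewrite !prod_nat_const (cardsD1 x S) xS; congr (_ ^ _ * _ ^ _)%N.
  by apply: eq_card => y; rewrite !inE.
by apply: eq_card => y; rewrite !inE unfold_in; case: (eqVneq y x) => [->|]; rewrite ?xS.
Qed.

Lemma card_ffun_one_zero :
  #|[set g | #|zeros g| == 1%N]| = (#|S| * (q ^ #|S|.-1 * q.+1 ^ #|~: S|))%N.
Proof.
have -> : [set g | #|zeros g| == 1%N] = [set g | zeros g \in [set [set x] | x in S]].
  apply/setP => g; rewrite !inE; apply/cards1P/imsetP => [[x Zx]|[x xS ->]].
    have : x \in zeros g by rewrite Zx set11.
    by rewrite inE => /andP[xS _]; exists x.
  by exists x.
rewrite card_preimset_sum big_imset /=; last by move=> x y _ _; apply: set1_inj.
by rewrite -sum_nat_const; apply: eq_bigr => x; apply: card_ffun_zeros_set1.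
Qed.

End ColouringsWithOneZero.

(** * Linear algebra *)

Lemma row_free_unitmx_transitive (F : fieldType) d n (M1 M2 : 'M[F]_(d, n)) :
  row_free M1 -> row_free M2 -> exists2 T, T \in unitmx & M1 *m T = M2.
Proof.
move=> fM1 fM2; have [B M1B] := row_freeP fM1.
have M1f : M1 *m (B *m M2) = M2 by rewrite mulmxA M1B mul1mx.
have [|T uT eT] := @complete_unitmx _ _ _ M1 (B *m M2).
  by rewrite M1f (eqP fM1) (eqP fM2).
by exists T; rewrite // -eT.
Qed.

Lemma not_row_full_ker (F : fieldType) d m (A : 'M[F]_(d, m)) :
  ~~ row_full A -> exists2 r : 'rV[F]_m, r != 0 & A *m r^T = 0.
Proof.
move=> nfA; have /rowV0Pn[r /sub_kermxP rA r0] : kermx A^T != 0.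
  by rewrite kermx_eq0 /row_free mxrank_tr.
by exists r => //; rewrite -[A]trmxK -trmx_mul rA trmx0.
Qed.

Lemma mulmx_orthogonal_surj (F : fieldType) d N m (M : 'M[F]_(d, N)) (r : 'rV[F]_m) :
  row_free M -> r != 0 -> forall y : 'cV[F]_d, exists L, M *m L *m r^T = y.
Proof.
move=> /row_freeP[Mi MMi] r0 y.
have [i ri] : exists i, r 0 i != 0.
  apply/existsP; apply: contraR r0 => /existsPn r0.
  by apply/eqP/rowP => i; rewrite mxE; apply/eqP/negbNE/r0.
exists (Mi *m y *m ((r 0 i)^-1 *: delta_mx 0 i)).
rewrite !mulmxA MMi mul1mx -mulmxA -scalemxAl -rowE [row i _]mx11_scalar !mxE.
by rewrite scale_scalar_mx mulVf // mulmx1.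
Qed.

Lemma card_rV2 n : #|'rV['F_2]_n| = (2 ^ n)%N.
Proof. by rewrite card_mx card_Fp // mul1n. Qed.

Lemma card_mx2 m n : #|'M['F_2]_(m, n)| = (2 ^ (m * n))%N.
Proof. by rewrite card_mx card_Fp. Qed.

Lemma card_fiber_row_full a b (X : 'M['F_2]_(a, b)) (w : 'rV['F_2]_b) : row_full X ->
  (#|[set v : 'rV_a | v *m X == w]| * 2 ^ b)%N = (2 ^ a)%N.
Proof.
move=> /row_fullP[Y XY]; rewrite -!card_rV2; apply: card_fiber_additive.
  by move=> u v; rewrite mulmxBl.
by move=> v; exists (v *m Y); rewrite -mulmxA XY mulmx1.
Qed.

Lemma card_mulmx_orthogonal N d m (M : 'M['F_2]_(d, N)) (r : 'rV['F_2]_m) :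
  row_free M -> r != 0 ->
  (#|[set L : 'M['F_2]_(N, m) | M *m L *m r^T == 0%R]| * 2 ^ d)%N = (2 ^ (N * m))%N.
Proof.
move=> fM r0; have -> : (2 ^ d)%N = #|'cV['F_2]_d| by rewrite card_mx2 muln1.
rewrite -card_mx2.
apply: card_fiber_additive; last exact: mulmx_orthogonal_surj.
by move=> u v; rewrite mulmxBr mulmxBl.
Qed.

Lemma card_not_row_full_mul N d m (M : 'M['F_2]_(d, N)) : row_free M ->
  (#|~: [set L : 'M['F_2]_(N, m) | row_full (M *m L)]| * 2 ^ d
     <= (2 ^ m - 1) * 2 ^ (N * m))%N.
Proof.
move=> fM; pose Z (r : 'rV['F_2]_m) := [set L | M *m L *m r^T == 0%R].
have sub : ~: [set L | row_full (M *m L)] \subset \bigcup_(r | r != 0%R) Z r.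
  apply/subsetP => L; rewrite !inE => /not_row_full_ker[r r0 MLr].
  by apply/bigcupP; exists r; rewrite // inE MLr.
apply: leq_trans (leq_mul (subset_leq_card sub) (leqnn _)) _.
apply: leq_trans (leq_mul (card_big_setU _ _ _) (leqnn _)) _.
rewrite big_distrl /= (eq_bigr (fun _ => 2 ^ (N * m)))%N => [|r r0]; last first.
  exact: card_mulmx_orthogonal.
rewrite (eq_bigl (mem (predC1 0%R))) // sum_nat_const leq_mul2r.
by rewrite cardC1 card_rV2 subn1 leqnn orbT.
Qed.

Lemma card_row_full_mul_ge (R : realFieldType) N d m k (M : 'M['F_2]_(d, N)) :
  d = (m + k)%N -> row_free M ->
  (1 - 2 ^- k) * (2 ^ (N * m))%:R
    <= #|[set L : 'M['F_2]_(N, m) | row_full (M *m L)]|%:R :> R.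
Proof.
move=> dmk fM; set G := [set L | row_full (M *m L)].
have GC : (#|G| + #|~: G|)%N = (2 ^ (N * m))%N by rewrite cardsC card_mx2.
have bad : (#|~: G| * 2 ^ k <= 2 ^ (N * m))%N.
  rewrite -(leq_pmul2r (expn_gt0 2 m)) -mulnA -expnD addnC -dmk.
  apply: leq_trans (card_not_row_full_mul m fM) _.
  by rewrite mulnC leq_mul2l leq_subr orbT.
rewrite -GC natrD mulrBl mul1r mulrC lerBlDr lerD2l ler_pdivlMr ?exprn_gt0 //.
by rewrite -natrD GC -natrX -natrM ler_nat.
Qed.

(** * Parametrised flats *)

(* A pair (x0, M) stands for the affine map v |-> x0 + v *m M from F_2^d to
   F_2^n; its image is a d-flat when M is row-free. *)
Notation aff_param d n := (F2vec n * 'M['F_2]_(d, n))%type.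

Definition amap n d (p : aff_param d n) (v : 'rV['F_2]_d) : F2vec n := p.1 + v *m p.2.

Definition acomp N n d (a : aff_param n N) (p : aff_param d n) : aff_param d N :=
  (amap a p.1, p.2 *m a.2).

Definition flat_of n d (p : aff_param d n) : {set F2vec n} := [set amap p v | v : 'rV['F_2]_d].

Definition flat_params n d : {set aff_param d n} := [set p | row_free p.2].

Lemma amap_comp N n d (a : aff_param n N) (p : aff_param d n) v :
  amap (acomp a p) v = amap a (amap p v).
Proof. by rewrite /amap /= mulmxDl mulmxA addrA. Qed.

Lemma acompA M N n d (a : aff_param N M) (b : aff_param n N) (p : aff_param d n) :
  acomp a (acomp b p) = acomp (acomp a b) p.
Proof. by rewrite /acomp /= amap_comp mulmxA. Qed.

Lemma acomp_params N n d (a : aff_param n N) (p : aff_param d n) :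
  a \in flat_params N n -> p \in flat_params n d -> acomp a p \in flat_params N d.
Proof. by rewrite !inE => fa fp; rewrite /row_free mxrankMfree. Qed.

Lemma amap_inj n d (p : aff_param d n) : p \in flat_params n d -> injective (amap p).
Proof. by rewrite inE => fp v w /addrI; apply: row_free_inj. Qed.

Lemma acomp_inj N n d (a : aff_param n N) :
  a \in flat_params N n -> injective (@acomp N n d a).
Proof.
move=> Pa [x M] [y M'] [/(amap_inj Pa) -> eM]; congr (_, _).
by move: Pa eM; rewrite inE => /row_free_inj; apply.
Qed.

Lemma flat_of_comp N n d (a : aff_param n N) (p : aff_param d n) :
  flat_of (acomp a p) = amap a @: flat_of p.
Proof. by rewrite /flat_of -imset_comp; apply: eq_imset => v; rewrite amap_comp. Qed.

Lemma card_flat n d (p : aff_param d n) : p \in flat_params n d -> #|flat_of p| = (2 ^ d)%N.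
Proof. by move=> /amap_inj pinj; rewrite card_imset // card_rV2. Qed.

Lemma card_flat_meet n d (p : aff_param d n) (A : {set F2vec n}) :
  p \in flat_params n d -> #|flat_of p :&: A| = #|[set v | amap p v \in A]|.
Proof.
move=> /amap_inj pinj; rewrite -[RHS](card_imset _ pinj); apply: eq_card => y.
rewrite !inE; apply/andP/imsetP => [[/imsetP[v _ ->] yA]|[v]].
  by exists v; rewrite ?inE.
by rewrite inE => vA ->; split=> //; apply/imsetP; exists v.
Qed.

Lemma card_flat_meet_preim N d m k (p : aff_param d N) (L : 'M['F_2]_(N, m))
    (B : {set 'rV['F_2]_m}) :
  d = (m + k)%N -> p \in flat_params N d -> row_full (p.2 *m L) ->
  #|flat_of p :&: [set y | y *m L \in B]| = (#|B| * 2 ^ k)%N.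
Proof.
move=> dmk Pp fL; rewrite card_flat_meet //.
have -> : [set v | amap p v \in [set y | y *m L \in B]]
        = [set v | p.1 *m L + v *m (p.2 *m L) \in B].
  by apply/setP => v; rewrite !inE /amap mulmxDl mulmxA.
apply/eqP; rewrite -(eqn_pmul2r (expn_gt0 2 m)) -mulnA -expnD addnC -dmk; apply/eqP.
rewrite card_preimset_sum big_distrl /= -sum_nat_const; apply: eq_bigr => b _.
rewrite -(card_fiber_row_full (b - p.1 *m L) fL); congr (_ * _)%N.
by apply: eq_card => v; rewrite !inE (can2_eq (addKr _) (addNKr _)) addrC.
Qed.

Lemma flat_params_gt0 n d : (d <= n)%N -> (0 < #|flat_params n d|)%N.
Proof. by move=> dn; apply/card_gt0P; exists (0, pid_mx d); rewrite inE /row_free rank_pid_mx. Qed.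

Lemma flat_params_transitive n d (p1 p2 : aff_param d n) :
  p1 \in flat_params n d -> p2 \in flat_params n d ->
  exists2 a, a \in flat_params n n & acomp a p1 = p2.
Proof.
rewrite !inE => f1 f2; have [T uT eT] := row_free_unitmx_transitive f1 f2.
exists (p2.1 - p1.1 *m T, T); first by rewrite inE row_free_unit.
by rewrite /acomp /amap /= eT addrNK -surjective_pairing.
Qed.

Lemma flatsP n d (Q : {set F2vec n}) :
  reflect (exists2 p, p \in flat_params n d & Q = flat_of p) (Q \in flats n d).
Proof.
rewrite inE; apply: (iffP existsP) => [[x0 /existsP[M /andP[fM /eqP->]]]|[p]].
  by exists (x0, M); rewrite ?inE.
rewrite inE => fp ->; exists p.1; apply/existsP; exists p.2; rewrite fp /=.
by apply/eqP/eq_imset.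
Qed.

Lemma flat_of_fibers_le n d (Q1 Q2 : {set F2vec n}) :
  Q1 \in flats n d -> Q2 \in flats n d ->
  (#|[set p in flat_params n d | flat_of p == Q1]|
     <= #|[set p in flat_params n d | flat_of p == Q2]|)%N.
Proof.
move=> /flatsP[p1 P1 ->] /flatsP[p2 P2 ->].
have [a Pa <-] := flat_params_transitive P1 P2.
rewrite -(card_imset _ (acomp_inj Pa)); apply/subset_leq_card/subsetP => q.
case/imsetP=> p; rewrite inE => /andP[Pp /eqP ep] ->.
by rewrite inE acomp_params //= !flat_of_comp ep.
Qed.

Lemma card_acomp_preim N n d (p : aff_param d n) : p \in flat_params n d ->
  exists K, forall P : pred (aff_param d N),
    #|[set a in flat_params N n | P (acomp a p)]| = (K * #|[set y in flat_params N d | P y]|)%N.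
Proof.
move=> Pp; apply: card_preim_uniform => [y1 y2 P1 P2|a Pa]; last exact: acomp_params.
have [b Pb <-] := flat_params_transitive P1 P2.
rewrite -(card_imset _ (acomp_inj Pb)); apply/subset_leq_card/subsetP => a'.
case/imsetP=> a; rewrite inE => /andP[Pa /eqP ea] ->.
by rewrite inE acomp_params //= -acompA ea.
Qed.

(** * The densities lambda^* *)

Lemma lamE_params (R : realType) n d s (A : {set F2vec n}) :
  lam R d s A = #|[set p in flat_params n d | #|flat_of p :&: A| == s]|%:R
                / #|flat_params n d|%:R.
Proof.
have [K cardK] := card_preim_uniform (@flat_of_fibers_le n d)
  (fun p Pp => introT (flatsP d _) (ex_intro2 _ _ p Pp erefl)).
have := cardK predT; rewrite !setIdT => cardP.
rewrite /lam (cardK (fun Q => #|Q :&: A| == s)) cardP.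
have [->|/card_gt0P[Q /flatsP[p Pp _]]] := posnP #|flats n d|.
  by rewrite muln0 !invr0 !mulr0.
have K0 : K != 0%N.
  by apply: contraTneq Pp => K0; move/eqP: cardP; rewrite K0 cards_eq0 => /eqP->; rewrite inE.
by rewrite !natrM -mulf_div divff ?mul1r // pnatr_eq0.
Qed.

Lemma lam_le_lamstar_n (R : realType) n d s (A : {set F2vec n}) :
  lam R d s A <= lamstar_n R n d s.
Proof. by rewrite /lamstar_n (bigD1 A) //= le_max lexx. Qed.

Lemma lamstar_n_ge0 (R : realType) n d s : 0 <= lamstar_n R n d s.
Proof. by rewrite /lamstar_n; elim/big_rec: _ => // A x _ hx; rewrite le_max hx orbT. Qed.

Lemma lamstar_n_le (R : realType) n d s (c : R) : 0 <= c ->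
  (forall A : {set F2vec n}, lam R d s A <= c) -> lamstar_n R n d s <= c.
Proof. by move=> c0 lamc; rewrite /lamstar_n; elim/big_rec: _ => // A x _; rewrite ge_max lamc. Qed.

Lemma lamstar_n_ge_average (R : realType) N d t (I : finType) (IS : {set I})
    (A : I -> {set F2vec N}) (c : R) :
  (0 < #|IS|)%N -> (d <= N)%N ->
  {in flat_params N d, forall p,
     c * #|IS|%:R <= #|[set i in IS | #|flat_of p :&: A i| == t]|%:R} ->
  c <= lamstar_n R N d t.
Proof.
move=> IS0 dN avg.
have P0 : (0 : R) < #|flat_params N d|%:R by rewrite ltr0n flat_params_gt0.
rewrite -(@ler_pM2r _ (#|IS|%:R * #|flat_params N d|%:R)) ?mulr_gt0 ?ltr0n ?flat_params_gt0 //.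
apply: (@le_trans _ _ (\sum_(i in IS) lam R d t (A i) * #|flat_params N d|%:R)); last first.
  rewrite mulrA -mulr_suml ler_pM2r // mulrC mulr_natl -sumr_const.
  by apply: ler_sum => i _; apply: lam_le_lamstar_n.
under eq_bigr do rewrite lamE_params mulfVK ?gt_eqF //.
rewrite -natr_sum sum_card_exchange natr_sum mulrA mulr_natr -sumr_const.
exact: ler_sum.
Qed.

Lemma lamstar_n_nonincreasing (R : realType) n d s : (d <= n)%N ->
  lamstar_n R n.+1 d s <= lamstar_n R n d s.
Proof.
move=> dn; apply: lamstar_n_le => [|A]; first exact: lamstar_n_ge0.
apply: (@lamstar_n_ge_average R n d s _ (flat_params n.+1 n) (fun a => amap a @^-1: A)).
- exact: flat_params_gt0.
- exact: dn.
move=> p Pp; have [K cardK] := card_acomp_preim n.+1 Pp.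
have := cardK predT; rewrite !setIdT => ->.
have -> : [set a in flat_params n.+1 n | #|flat_of p :&: amap a @^-1: A| == s]
        = [set a in flat_params n.+1 n | #|flat_of (acomp a p) :&: A| == s].
  apply/setP => a; rewrite !inE; apply: andb_id2l => fa.
  have Pa : a \in flat_params n.+1 n by rewrite inE.
  rewrite !card_flat_meet ?acomp_params //.
  suff -> : [set v | amap p v \in amap a @^-1: A] = [set v | amap (acomp a p) v \in A] by [].
  by apply/setP => v; rewrite !inE amap_comp.
move: (cardK (fun y => #|flat_of y :&: A| == s)) => /= ->.
rewrite lamE_params !natrM mulrCA divfK // pnatr_eq0 -lt0n.
exact/flat_params_gt0/ltnW.
Qed.

Lemma lamstar_ge (R : realType) d t (c : R) :
  (forall N, (d <= N)%N -> c <= lamstar_n R N d t) -> c <= lamstar R d t.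
Proof.
move=> c_le; apply: limr_ge; last by exists d => // N /= /c_le.
apply: (@near_nonincreasing_is_cvgn _ _ c); last by exists d => // N /= /c_le.
exists d => // N /= dN N'; elim: N' => [|N' IH]; first by rewrite leqn0 => /eqP->.
rewrite leq_eqVlt => /orP[/eqP->//|]; rewrite ltnS => NN'.
by apply: le_trans (IH NN'); apply/lamstar_n_nonincreasing/(leq_trans dN).
Qed.

(** * The planted sets *)

Lemma succn_exp_le_expR1 (R : realType) q :
  (q.+1%:R : R) ^+ q <= expR 1 * q%:R ^+ q.
Proof.
case: q => [|q]; first by rewrite !expr0 mulr1 -expR0 ler_expR.
have qS : (q.+2%:R : R) = q.+1%:R * (1 + q.+1%:R^-1).
  by rewrite mulrDr mulr1 mulfV ?pnatr_eq0 // -natr1.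
rewrite qS exprMn mulrC ler_pM2r ?exprn_gt0 ?ltr0n //.
apply: le_trans (_ : expR (q.+1%:R^-1) ^+ q.+1 <= _).
  by apply: lerXn2r; rewrite ?nnegrE ?addr_ge0 ?invr_ge0 ?expR_ge0 // expR_ge1Dx.
by rewrite -expRM_natl mulfV ?pnatr_eq0.
Qed.

Lemma lamstar_n_ge_planted (R : realType) N d m k q (t : nat)
    (A : 'M['F_2]_(N, m) -> {ffun F2vec N -> 'I_q.+1} -> {set F2vec N})
    (S : aff_param d N -> 'M['F_2]_(N, m) -> {set F2vec N}) :
  d = (m + k)%N -> (d <= N)%N -> (q.+1 <= 2 ^ N)%N ->
  (forall p L, p \in flat_params N d -> row_full (p.2 *m L) ->
     #|S p L| = q.+1 /\ forall g : {ffun F2vec N -> 'I_q.+1},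
       #|[set y in S p L | g y == ord0]| = 1%N ->
                                 #|flat_of p :&: A L g| = t) ->
  (expR 1)^-1 * (1 - 2 ^- k) <= lamstar_n R N d t.
Proof.
move=> dmk dN qN planted.
pose I := ('M['F_2]_(N, m) * {ffun F2vec N -> 'I_q.+1})%type.
pose Z := (q.+1 * q.+1 ^ (2 ^ N - q.+1))%N.
have cardI : #|[set: I]| = (2 ^ (N * m) * (q.+1 ^ q * Z))%N.
  rewrite cardsT card_prod card_ffun card_ord card_rV2 card_mx2 /Z.
  by rewrite -expnS -expnD addnS -addSn subnKC.
apply: (@lamstar_n_ge_average R N d t I [set: I] (fun i => A i.1 i.2)) => //.
  by rewrite cardI !muln_gt0 !expn_gt0.
move=> p Pp; pose Good := [set L : 'M['F_2]_(N, m) | row_full (p.2 *m L)].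
have count : (#|Good| * (q ^ q * Z) <=
    #|[set i in [set: I] | #|flat_of p :&: A i.1 i.2| == t]|)%N.
  apply: (@leq_trans #|[set i : I | (i.1 \in Good) &&
                        (#|[set y in S p i.1 | i.2 y == ord0]| == 1%N)]|).
    rewrite (card_pairs_sum Good (fun L (g : {ffun F2vec N -> 'I_q.+1}) =>
                                    #|[set y in S p L | g y == ord0]| == 1%N)).
    rewrite -sum_nat_const; apply/eq_leq/eq_bigr => L; rewrite inE => fL.
    have [cS _] := planted p L Pp fL.
    have cSC : #|~: S p L| = (2 ^ N - q.+1)%N.
      by rewrite -cS -card_rV2 -(cardsC (S p L)) addKn.
    by rewrite card_ffun_one_zero cS cSC /Z mulnCA.
  apply/subset_leq_card/subsetP => i; rewrite !inE => /andP[fL /eqP one].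
  by have [_ ht] := planted p i.1 Pp fL; apply/eqP/ht.
apply: le_trans (_ : _ <= (#|Good| * (q ^ q * Z))%:R) _; last by rewrite ler_nat.
clearbody Z; rewrite cardI !natrM (natrX _ q.+1 q) (natrX _ q q).
set X := (2 ^ (N * m))%:R; set Y := _ ^+ q; set Zr := Z%:R.
have -> : (expR 1)^-1 * (1 - 2 ^- k) * (X * (Y * Zr))
        = ((1 - 2 ^- k) * X) * ((expR 1)^-1 * Y * Zr) by ring.
apply: ler_pM; rewrite ?mulr_ge0 ?invr_ge0 ?expR_ge0 ?exprn_ge0 ?ler0n //.
- by rewrite subr_ge0 invf_le1 ?exprn_gt0 // exprn_ege1 // ler1n.
- by rewrite /X; apply: card_row_full_mul_ge dmk _; move: Pp; rewrite inE.
rewrite ler_wpM2r ?ler0n // mulrC ler_pdivrMr ?expR_gt0 // mulrC.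
exact: succn_exp_le_expR1.
Qed.

Section PlantedSets.

Variables (R : realType) (N d m k : nat) (B : {set 'rV['F_2]_m}).
Hypotheses (dmk : d = (m + k)%N) (dN : (d <= N)%N).

Let preB (L : 'M['F_2]_(N, m)) := [set y | y *m L \in B].

Lemma lamstar_n_succ_ge : (#|B| * 2 ^ k < 2 ^ d)%N ->
  (expR 1)^-1 * (1 - 2 ^- k) <= lamstar_n R N d (#|B| * 2 ^ k).+1.
Proof.
move=> sd; set s := (#|B| * 2 ^ k)%N in sd *.
have [q q1] : exists q, q.+1 = (2 ^ d - s)%N by exists (2 ^ d - s).-1; rewrite prednK ?subn_gt0.
apply: (@lamstar_n_ge_planted R N d m k q s.+1
  (fun L g => preB L :|: [set y | g y == ord0]) (fun p L => flat_of p :\: preB L)) => //.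
  by rewrite q1 (leq_trans (leq_subr _ _)) // leq_exp2l.
move=> p L Pp fL; have sB := card_flat_meet_preim B dmk Pp fL.
split=> [|g one]; first by rewrite cardsD sB card_flat.
have -> : s.+1 = (#|flat_of p :&: preB L| + #|[set y in flat_of p :\: preB L | g y == ord0]|)%N.
  by rewrite sB one addn1.
rewrite -(cardsID (preB L)); congr (_ + _)%N; apply: eq_card => y;
  by rewrite !inE; case: (y *m L \in B); rewrite /= ?andbT ?andbF ?orbT.
Qed.

Lemma lamstar_n_pred_ge : (0 < #|B|)%N ->
  (expR 1)^-1 * (1 - 2 ^- k) <= lamstar_n R N d (#|B| * 2 ^ k).-1.
Proof.
move=> B0; set s := (#|B| * 2 ^ k)%N.
have [q q1] : exists q, q.+1 = s by exists s.-1; rewrite prednK // muln_gt0 B0 expn_gt0.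
apply: (@lamstar_n_ge_planted R N d m k q s.-1
  (fun L g => preB L :&: [set y | g y != ord0]) (fun p L => flat_of p :&: preB L)) => //.
  rewrite q1 (leq_trans _ (leq_pexp2l _ dN)) // dmk expnD leq_mul2r.
  by rewrite -(card_rV2 m) max_card orbT.
move=> p L Pp fL; have sB := card_flat_meet_preim B dmk Pp fL.
split=> [|g one]; first by rewrite sB.
have cZ : #|flat_of p :&: preB L :&: [set y | g y == ord0]| = 1%N.
  by apply: etrans one; apply: eq_card => y; rewrite !inE.
rewrite /s -sB -(cardsID [set y | g y == ord0] (flat_of p :&: preB L)) cZ add1n /=.
by apply: eq_card => y; rewrite !inE [RHS]andbC -andbA.
Qed.

End PlantedSets.

Unset Implicit Arguments.

Theorem corollary1p6 (R : realType) (d s j k : nat) :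
  (1 < d)%N -> (1 < s)%N -> (s < 2 ^ d)%N ->
  odd j -> (1 <= k)%N -> s = (j * 2 ^ k)%N ->
  (expR (1 : R))^-1 * (1 - (2 : R) ^- k) <= lamstar R d s.+1 /\
  (expR (1 : R))^-1 * (1 - (2 : R) ^- k) <= lamstar R d s.-1.
Proof.
move=> _ s1 sd _ _ sj.
have j0 : (0 < j)%N by move: s1; rewrite sj lt0n; apply: contraTneq => ->.
have kd : (k <= d)%N.
  by rewrite -(@leq_exp2l 2) // ltnW // (leq_ltn_trans _ sd) // sj leq_pmull.
set m := (d - k)%N; have dmk : d = (m + k)%N by rewrite subnK.
have jm : (j <= 2 ^ m)%N.
  by rewrite -(@leq_pmul2r (2 ^ k)) ?expn_gt0 // -expnD -dmk -sj ltnW.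
have [B /[!inE] /eqP cB] : exists B, B \in [set B : {set 'rV['F_2]_m} | #|B| == j].
  by apply/card_gt0P; rewrite card_draws bin_gt0 card_rV2.
rewrite sj -cB; split; apply: lamstar_ge => N dN.
  by apply: lamstar_n_succ_ge; rewrite // cB -sj.
by apply: lamstar_n_pred_ge; rewrite // cB.
Qed.
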